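(* Let $\theta\mapsto P_\theta$ ($\theta$ in an open subset of $\mathbb{R}^p$) be a family of regular $X\times X$ transition matrices, continuously differentiable in $\theta$, with $(P_\theta)_{ij}=0$ implying $\nabla_\theta(P_\theta)_{ij}=0$, and with stationary distribution $\pi_\theta$. Fix $c\in\mathbb{R}^X$ and an initial distribution $\pi_0$ independent of $\theta$. Simulate $x_0\sim\pi_0$ and $x_1,\dots,x_N$ with transition matrix $P_\theta$, set $S_0=0$, $S_k=S_{k-1}+\nabla_\theta (P_\theta)_{x_{k-1}x_k}/(P_\theta)_{x_{k-1}x_k}$ for $k=1,\dots,N$, and define the score function estimator $\widehat{\nabla_\theta C}_N=\frac1N\sum_{k=1}^N c(x_k)S_k$. Then there exist constants $K_1,K_2$ independent of $N$ such that for all $N\ge1$: (a) $\bigl\|\mathbb{E}\{\widehat{\nabla_\theta C}_N\}-\nabla_\theta(c'\pi_\theta)\bigr\|\le K_1/N$ (bias $O(1/N)$); (b) the variance (trace of the covariance matrix) of $\widehat{\nabla_\theta C}_N$ is at most $K_2N$ (variance $O(N)$).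
   Context: A transition matrix is regular if some power has all entries strictly positive; $\pi_\theta$ is its unique stationary distribution. Gradients with respect to $\theta$ are taken entrywise. *)

From Stdlib Require Import Reals List Lia Lra.
Open Scope R_scope.

(* State space X = {0,...,n-1}; parameter space R^p embedded as functions
   nat -> R vanishing at coordinates >= p. *)

Fixpoint rsum (n : nat) (f : nat -> R) : R :=
  match n with
  | O => 0
  | S k => rsum k f + f k
  end.

Fixpoint mpow (n : nat) (A : nat -> nat -> R) (m : nat) : nat -> nat -> R :=
  match m with
  | O => fun i j => if Nat.eqb i j then 1 else 0
  | S m' => fun i j => rsum n (fun k => mpow n A m' i k * A k j)
  end.

Definition is_transition (n : nat) (A : nat -> nat -> R) : Prop :=
  (forall i j, (i < n)%nat -> (j < n)%nat -> 0 <= A i j) /\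
  (forall i, (i < n)%nat -> rsum n (fun j => A i j) = 1).

Definition regular (n : nat) (A : nat -> nat -> R) : Prop :=
  exists m, forall i j, (i < n)%nat -> (j < n)%nat -> 0 < mpow n A m i j.

Definition is_distribution (n : nat) (v : nat -> R) : Prop :=
  (forall i, (i < n)%nat -> 0 <= v i) /\ rsum n v = 1.

Definition is_stationary (n : nat) (A : nat -> nat -> R) (v : nat -> R) : Prop :=
  is_distribution n v /\
  forall j, (j < n)%nat -> rsum n (fun i => v i * A i j) = v j.

Definition in_Rp (p : nat) (th : nat -> R) : Prop :=
  forall l, (p <= l)%nat -> th l = 0.

Definition close (p : nat) (th th' : nat -> R) (eps : R) : Prop :=
  forall l, (l < p)%nat -> Rabs (th' l - th l) < eps.

Definition open_Rp (p : nat) (U : (nat -> R) -> Prop) : Prop :=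
  (forall th, U th -> in_Rp p th) /\
  forall th, U th -> exists eps, 0 < eps /\
    forall th', in_Rp p th' -> close p th th' eps -> U th'.

Definition shift (th : nat -> R) (l : nat) (t : R) : nat -> R :=
  fun m => if Nat.eqb m l then th m + t else th m.

Fixpoint paths (n m : nat) : list (list nat) :=
  match m with
  | O => nil :: nil
  | S m' => flat_map (fun s => map (fun x => x :: s) (seq 0 n)) (paths n m')
  end.

Definition path_prob (pi0 : nat -> R) (A : nat -> nat -> R) (N : nat)
    (x : list nat) : R :=
  pi0 (nth 0 x 0%nat) *
  fold_right Rmult 1
    (map (fun k => A (nth (k - 1) x 0%nat) (nth k x 0%nat)) (seq 1 N)).

Definition expect (n : nat) (pi0 : nat -> R) (A : nat -> nat -> R) (N : nat)
    (f : list nat -> R) : R :=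
  fold_right Rplus 0 (map (fun x => path_prob pi0 A N x * f x) (paths n (S N))).

Definition score (A : nat -> nat -> R) (dA : nat -> nat -> nat -> R)
    (x : list nat) (k l : nat) : R :=
  rsum k (fun j => let a := nth j x 0%nat in let b := nth (S j) x 0%nat in
                   dA a b l / A a b).

Definition estimator (c : nat -> R) (A : nat -> nat -> R)
    (dA : nat -> nat -> nat -> R) (N : nat) (x : list nat) (l : nat) : R :=
  / INR N * rsum N (fun k => c (nth (S k) x 0%nat) * score A dA x (S k) l).

(** The expected estimator is an explicit convolution: with [mu_j = pi0 P^j], the term
    [E (dP/P)(x_j, x_(j+1)) c(x_(k+1))] equals [mu_j dP (P^(k-j) c)], and since the rows of
    [dP] sum to zero, [P^(k-j) c] may be replaced by its deviation [P^(k-j) c - pi c].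
    Regularity gives geometric ergodicity [|P^k - 1 pi| <= C rho^k] by Doeblin's contraction
    argument.  Hence the deviations are summable, their series [h] solves the Poisson equation
    [h - P h = c - pi c], and the perturbation identity [pi' c - pi c = pi' (P' - P) h] shows
    that the gradient of [c' pi_th] is [pi dP h].  The [k]-th term of the convolution differs
    from this gradient by [O((k+1) rho^k)], so averaging over [k < N] leaves a bias [O(1/N)].
    For the variance, the score is a martingale with bounded increments, so [E S_k^2 = O(k)]. *)

From Pilot Require Import Defs.
From Stdlib Require Import Reals List Lia Lra Psatz FunctionalExtensionality.
From Coquelicot Require Import Coquelicot.
Import Defs. (* Coquelicot also defines [close] *)
Open Scope R_scope.

Lemma rsum_ext m f g : (forall k, (k < m)%nat -> f k = g k) -> rsum m f = rsum m g.
Proof.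
  induction m as [|m IH]; intros H; simpl; auto.
  rewrite IH by (intros; apply H; lia). now rewrite H by lia.
Qed.

Lemma rsum_add m f g : rsum m (fun k => f k + g k) = rsum m f + rsum m g.
Proof. induction m as [|m IH]; simpl; [lra|]. rewrite IH; lra. Qed.

Lemma rsum_sub m f g : rsum m (fun k => f k - g k) = rsum m f - rsum m g.
Proof. induction m as [|m IH]; simpl; [lra|]. rewrite IH; lra. Qed.

Lemma rsum_scal_l m c f : rsum m (fun k => c * f k) = c * rsum m f.
Proof. induction m as [|m IH]; simpl; [lra|]. rewrite IH; lra. Qed.

Lemma rsum_scal_r m c f : rsum m (fun k => f k * c) = rsum m f * c.
Proof. induction m as [|m IH]; simpl; [lra|]. rewrite IH; lra. Qed.

Lemma rsum_const m c : rsum m (fun _ => c) = INR m * c.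
Proof. induction m as [|m IH]; simpl rsum; [simpl; lra|]. rewrite IH, S_INR; lra. Qed.

Lemma rsum_zero m : rsum m (fun _ => 0) = 0.
Proof. rewrite rsum_const; ring. Qed.

Lemma rsum_le m f g : (forall k, (k < m)%nat -> f k <= g k) -> rsum m f <= rsum m g.
Proof.
  induction m as [|m IH]; intros H; simpl; [lra|].
  apply Rplus_le_compat; [apply IH; intros|]; apply H; lia.
Qed.

Lemma rsum_nonneg m f : (forall k, (k < m)%nat -> 0 <= f k) -> 0 <= rsum m f.
Proof. intros H. rewrite <- (rsum_zero m). now apply rsum_le. Qed.

Lemma rsum_swap m q f :
  rsum m (fun i => rsum q (fun j => f i j)) = rsum q (fun j => rsum m (fun i => f i j)).
Proof. induction m as [|m IH]; simpl. - now rewrite rsum_zero. - now rewrite IH, <- rsum_add. Qed.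

Lemma rsum_abs_le m f : Rabs (rsum m f) <= rsum m (fun k => Rabs (f k)).
Proof.
  induction m as [|m IH]; simpl; [rewrite Rabs_R0; lra|].
  eapply Rle_trans; [apply Rabs_triang | lra].
Qed.

Lemma rsum_term_le m f k :
  (forall i, (i < m)%nat -> 0 <= f i) -> (k < m)%nat -> f k <= rsum m f.
Proof.
  induction m as [|m IH]; intros H Hk; [lia|]. simpl.
  destruct (Nat.eq_dec k m) as [->|Hkm].
  - pose proof (rsum_nonneg m f (fun i Hi => H i ltac:(lia))). lra.
  - pose proof (IH (fun i Hi => H i ltac:(lia)) ltac:(lia)). pose proof (H m ltac:(lia)). lra.
Qed.

Lemma rsum_delta_l m i f :
  (i < m)%nat -> rsum m (fun j => (if Nat.eqb i j then 1 else 0) * f j) = f i.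
Proof.
  induction m as [|m IH]; intros Hi; [lia|]. simpl.
  destruct (Nat.eq_dec i m) as [->|Him].
  - rewrite Nat.eqb_refl, (rsum_ext _ _ (fun _ => 0)), rsum_zero; [ring|].
    intros k Hk. destruct (Nat.eqb_spec m k); [lia | ring].
  - rewrite IH by lia. destruct (Nat.eqb_spec i m); [lia | ring].
Qed.

Lemma rsum_delta_r m i f :
  (i < m)%nat -> rsum m (fun j => f j * (if Nat.eqb j i then 1 else 0)) = f i.
Proof.
  intros Hi. rewrite <- (rsum_delta_l m i f Hi). apply rsum_ext. intros k _.
  destruct (Nat.eqb_spec i k), (Nat.eqb_spec k i); subst; try lia; ring.
Qed.

Lemma rsum_rev k f : rsum (S k) (fun j => f (k - j)%nat) = rsum (S k) f.
Proof.
  revert f. induction k as [|k IH]; intros f; [reflexivity|].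
  assert (Hshift : forall m g, rsum (S m) g = g O + rsum m (fun i => g (S i))).
  { induction m as [|m IHm]; intros g; simpl rsum in *; [lra|]. rewrite IHm; lra. }
  rewrite (Hshift (S k) f).
  change (rsum (S (S k)) (fun j => f (S k - j)%nat))
    with (rsum (S k) (fun j => f (S k - j)%nat) + f (S k - S k)%nat).
  rewrite Nat.sub_diag, <- (IH (fun i => f (S i))).
  rewrite (rsum_ext _ (fun j => f (S k - j)%nat) (fun j => f (S (k - j)))); [ring|].
  intros j Hj. f_equal. lia.
Qed.

Lemma rsum_sqr_le m a : Rsqr (rsum m a) <= INR m * rsum m (fun k => Rsqr (a k)).
Proof.
  induction m as [|m IH]; simpl rsum; [unfold Rsqr; simpl; lra|].
  rewrite S_INR. set (A := rsum m a) in *. set (S := rsum m (fun k => Rsqr (a k))) in *.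
  assert (HS : 0 <= S) by (apply rsum_nonneg; intros; apply Rle_0_sqr).
  pose proof (pos_INR m). pose proof (Rle_0_sqr (A - INR m * a m)). unfold Rsqr in *.
  destruct (Req_dec (INR m) 0) as [E|E].
  - rewrite E in IH |- *. assert (A = 0) by nra. subst A. nra.
  - assert (0 < INR m) by lra. nra.
Qed.

Lemma Rsqr_mean_le N a : (0 < N)%nat ->
  Rsqr (/ INR N * rsum N a) <= / INR N * rsum N (fun k => Rsqr (a k)).
Proof.
  intros HN. assert (HNpos : 0 < INR N) by (apply lt_0_INR; lia).
  rewrite Rsqr_mult. pose proof (rsum_sqr_le N a).
  replace (/ INR N * rsum N (fun k => Rsqr (a k)))
    with (Rsqr (/ INR N) * (INR N * rsum N (fun k => Rsqr (a k)))) by (unfold Rsqr; field; lra).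
  apply Rmult_le_compat_l; [apply Rle_0_sqr | auto].
Qed.

Lemma Rle_pow_le1 (r : R) a b : 0 <= r <= 1 -> (a <= b)%nat -> r ^ b <= r ^ a.
Proof.
  intros Hr Hab. replace b with (a + (b - a))%nat by lia. rewrite pow_add.
  pose proof (pow_le r a ltac:(lra)).
  assert (r ^ (b - a) <= 1) by (rewrite <- (pow1 (b - a)); apply pow_incr; lra). nra.
Qed.

Lemma rsum_pow_le rho N : 0 <= rho < 1 -> rsum N (fun k => rho ^ k) <= / (1 - rho).
Proof.
  intros Hr. assert (E : rsum N (fun k => rho ^ k) * (1 - rho) = 1 - rho ^ N).
  { induction N as [|N IH]; simpl; [ring|]. rewrite Rmult_plus_distr_r, IH. ring. }
  pose proof (pow_le rho N ltac:(lra)).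
  apply Rmult_le_reg_r with (1 - rho); [lra|]. rewrite E, Rinv_l by lra. lra.
Qed.

Lemma rsum_succ_pow_le rho N :
  0 <= rho < 1 -> rsum N (fun k => INR (S k) * rho ^ k) <= / (1 - rho) ^ 2.
Proof.
  intros Hr.
  assert (E : rsum N (fun k => INR (S k) * rho ^ k) * (1 - rho) ^ 2
              = 1 - INR (S N) * rho ^ N + INR N * rho ^ S N).
  { induction N as [|N IH]; [simpl; ring|].
    change (rsum (S N) ?F) with (rsum N F + F N).
    rewrite Rmult_plus_distr_r, IH, !S_INR. simpl. ring. }
  pose proof (pow_le rho N ltac:(lra)). pose proof (pos_INR N).
  assert (INR N * rho ^ S N <= INR (S N) * rho ^ N)
    by (rewrite S_INR; simpl pow; assert (0 <= INR N * rho ^ N) by nra; nra).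
  assert (0 < (1 - rho) ^ 2) by (apply pow_lt; lra).
  apply Rmult_le_reg_r with ((1 - rho) ^ 2); auto. rewrite E, Rinv_l by lra. lra.
Qed.

Definition lsum {T} (L : list T) (F : T -> R) : R := fold_right Rplus 0 (map F L).

Lemma lsum_app {T} (L1 L2 : list T) F : lsum (L1 ++ L2) F = lsum L1 F + lsum L2 F.
Proof. unfold lsum. induction L1 as [|a L1 IH]; simpl; [lra|]. rewrite IH; lra. Qed.

Lemma lsum_ext {T} (L : list T) F G : (forall x, F x = G x) -> lsum L F = lsum L G.
Proof. intros H. unfold lsum. now rewrite (map_ext F G H). Qed.

Lemma lsum_scal {T} (L : list T) c F : lsum L (fun x => c * F x) = c * lsum L F.
Proof. unfold lsum. induction L as [|a L IH]; simpl; [ring|]. rewrite IH; ring. Qed.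

Lemma lsum_rsum {T} (L : list T) m F :
  lsum L (fun x => rsum m (fun k => F k x)) = rsum m (fun k => lsum L (F k)).
Proof.
  unfold lsum. induction L as [|a L IH]; simpl.
  - now rewrite rsum_zero.
  - now rewrite IH, rsum_add.
Qed.

Lemma lsum_seq0 n F : lsum (seq 0 n) F = rsum n F.
Proof.
  induction n as [|n IH]; [reflexivity|].
  rewrite seq_S, lsum_app, IH. unfold lsum; simpl; lra.
Qed.

Lemma lsum_paths_succ n m F :
  lsum (paths n (S m)) F = lsum (paths n m) (fun s => rsum n (fun a => F (a :: s))).
Proof.
  simpl. induction (paths n m) as [|s L IH]; [reflexivity|]. simpl flat_map.
  rewrite lsum_app, IH. unfold lsum at 1 3. simpl.
  rewrite <- lsum_seq0. unfold lsum. rewrite map_map. ring.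
Qed.

Lemma path_prob_cons v A N a s :
  path_prob v A (S N) (a :: s) = v a * path_prob (A a) A N s.
Proof.
  unfold path_prob.
  replace (map (fun k => A (nth (k - 1) (a :: s) 0%nat) (nth k (a :: s) 0%nat)) (seq 1 (S N)))
    with (A a (nth 0 s 0%nat) :: map (fun k => A (nth (k - 1) s 0%nat) (nth k s 0%nat)) (seq 1 N)).
  { simpl. ring. }
  simpl seq. simpl map. f_equal. rewrite <- (seq_shift N 1), map_map.
  apply map_ext_in. intros k Hk. apply in_seq in Hk.
  destruct k as [|k]; [lia|]. simpl. now rewrite Nat.sub_0_r.
Qed.

Lemma expect_zero_steps n v A f : expect n v A 0 f = rsum n (fun a => v a * f (a :: nil)).
Proof.
  unfold expect. fold (lsum (paths n 1) (fun x => path_prob v A 0 x * f x)).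
  rewrite lsum_paths_succ. unfold lsum, path_prob; simpl.
  rewrite Rplus_0_r. apply rsum_ext. intros. ring.
Qed.

Lemma expect_succ n v A N f :
  expect n v A (S N) f = rsum n (fun a => v a * expect n (A a) A N (fun s => f (a :: s))).
Proof.
  unfold expect. fold (lsum (paths n (S (S N))) (fun x => path_prob v A (S N) x * f x)).
  rewrite lsum_paths_succ.
  rewrite (lsum_ext _ _ (fun s => rsum n (fun a => v a * (path_prob (A a) A N s * f (a :: s)))))
    by (intros s; apply rsum_ext; intros; rewrite path_prob_cons; ring).
  rewrite lsum_rsum. apply rsum_ext. intros a _.
  now rewrite lsum_scal.
Qed.

Lemma expect_ext n v A N f g :
  (forall x, f x = g x) -> expect n v A N f = expect n v A N g.
Proof. intros H. unfold expect. now rewrite (map_ext _ _ (fun x => f_equal _ (H x))). Qed.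

Lemma expect_rsum n v A N m F :
  expect n v A N (fun x => rsum m (fun k => F k x)) = rsum m (fun k => expect n v A N (F k)).
Proof.
  unfold expect. fold (lsum (paths n (S N)) (fun x => path_prob v A N x * rsum m (fun k => F k x))).
  rewrite (lsum_ext _ _ (fun x => rsum m (fun k => path_prob v A N x * F k x)))
    by (intros; now rewrite rsum_scal_l).
  now rewrite lsum_rsum.
Qed.

Lemma expect_add n v A N f g :
  expect n v A N (fun x => f x + g x) = expect n v A N f + expect n v A N g.
Proof.
  unfold expect. induction (paths n (S N)) as [|x L IH]; simpl; [ring|]. rewrite IH. ring.
Qed.

Lemma expect_scal n v A N c f : expect n v A N (fun x => c * f x) = c * expect n v A N f.
Proof.
  unfold expect. induction (paths n (S N)) as [|x L IH]; simpl; [ring|]. rewrite IH. ring.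
Qed.

Lemma expect_le n v A N f g :
  (forall a b, (a < n)%nat -> (b < n)%nat -> 0 <= A a b) -> (forall a, (a < n)%nat -> 0 <= v a) ->
  (forall x, (forall i, (nth i x 0 < n)%nat) -> f x <= g x) ->
  expect n v A N f <= expect n v A N g.
Proof.
  intros HA. revert v f g. induction N as [|N IH]; intros v f g Hv Hfg.
  - rewrite !expect_zero_steps. apply rsum_le. intros a Ha.
    apply Rmult_le_compat_l; auto. apply Hfg. intros [|[|i]]; simpl; auto; lia.
  - rewrite !expect_succ. apply rsum_le. intros a Ha.
    apply Rmult_le_compat_l; auto. apply IH; [intros; now apply HA|].
    intros s Hs. apply Hfg. intros [|i]; simpl; auto.
Qed.

Lemma expect_const n v A N c :
  is_transition n A -> expect n v A N (fun _ => c) = c * rsum n v.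
Proof.
  intros [_ HA]. revert v. induction N as [|N IH]; intros v.
  - rewrite expect_zero_steps, <- rsum_scal_l. apply rsum_ext; intros; ring.
  - rewrite expect_succ, <- rsum_scal_l. apply rsum_ext. intros a Ha. rewrite IH, HA; auto. ring.
Qed.

Definition dot n (v g : nat -> R) : R := rsum n (fun e => v e * g e).

Definition mxv n (M : nat -> nat -> R) (g : nat -> R) (i : nat) : R :=
  rsum n (fun e => M i e * g e).

Definition vmx n (v : nat -> R) (M : nat -> nat -> R) (j : nat) : R :=
  rsum n (fun i => v i * M i j).

Lemma transition_row_sum n (M : nat -> nat -> R) i :
  is_transition n M -> (i < n)%nat -> rsum n (M i) = 1.
Proof. intros [_ H1] Hi. exact (H1 i Hi). Qed.

Lemma transition_entry_bounds n (M : nat -> nat -> R) i j :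
  is_transition n M -> (i < n)%nat -> (j < n)%nat -> 0 <= M i j <= 1.
Proof.
  intros [H0 H1] Hi Hj. split; auto.
  rewrite <- (H1 i Hi). apply (rsum_term_le n (fun j => M i j)); auto.
Qed.

Lemma distribution_entry_bounds n (v : nat -> R) i :
  is_distribution n v -> (i < n)%nat -> 0 <= v i <= 1.
Proof. intros [H0 H1] Hi. split; auto. rewrite <- H1. now apply rsum_term_le. Qed.

Section MatrixPowers.
Variable n : nat.
Variable A : nat -> nat -> R.

Lemma mpow_add a b i j : (j < n)%nat ->
  mpow n A (a + b) i j = rsum n (fun k => mpow n A a i k * mpow n A b k j).
Proof.
  revert j. induction b as [|b IH]; intros j Hj.
  - rewrite Nat.add_0_r. symmetry. apply (rsum_delta_r n j (mpow n A a i) Hj).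
  - rewrite Nat.add_succ_r. simpl mpow.
    rewrite (rsum_ext _ _ (fun k => rsum n (fun m => mpow n A a i m * mpow n A b m k * A k j)))
      by (intros k Hk; rewrite IH, <- rsum_scal_r by auto; reflexivity).
    rewrite rsum_swap. apply rsum_ext. intros m _.
    rewrite <- rsum_scal_l. apply rsum_ext. intros. ring.
Qed.

Lemma mpow_succ_l m i j : (i < n)%nat -> (j < n)%nat ->
  mpow n A (S m) i j = rsum n (fun k => A i k * mpow n A m k j).
Proof.
  intros Hi Hj. rewrite <- Nat.add_1_l, mpow_add by auto. apply rsum_ext. intros k _.
  simpl. rewrite (rsum_delta_l n i (fun k' => A k' k) Hi). reflexivity.
Qed.

Lemma mxv_mpow_0 g i : (i < n)%nat -> mxv n (mpow n A 0) g i = g i.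
Proof. intros Hi. apply rsum_delta_l, Hi. Qed.

Lemma mxv_mpow_succ m g i : (i < n)%nat ->
  mxv n (mpow n A (S m)) g i = rsum n (fun a => A i a * mxv n (mpow n A m) g a).
Proof.
  intros Hi. unfold mxv.
  rewrite (rsum_ext _ _ (fun e => rsum n (fun a => A i a * mpow n A m a e * g e)))
    by (intros; rewrite mpow_succ_l, <- rsum_scal_r by auto; apply rsum_ext; intros; ring).
  rewrite rsum_swap. apply rsum_ext. intros. rewrite <- rsum_scal_l. apply rsum_ext. intros. ring.
Qed.

Lemma stationary_mpow pi m j : is_stationary n A pi -> (j < n)%nat ->
  vmx n pi (mpow n A m) j = pi j.
Proof.
  intros [_ Hs]. unfold vmx. revert j. induction m as [|m IH]; intros j Hj.
  - apply rsum_delta_r, Hj.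
  - simpl. rewrite (rsum_ext _ _ (fun i => rsum n (fun k => pi i * mpow n A m i k * A k j)))
      by (intros; rewrite <- rsum_scal_l; apply rsum_ext; intros; ring).
    rewrite rsum_swap, <- (Hs j Hj). apply rsum_ext. intros k Hk.
    now rewrite rsum_scal_r, IH.
Qed.

Hypothesis HA : is_transition n A.

Lemma is_transition_mpow m : is_transition n (mpow n A m).
Proof.
  destruct HA as [HA0 HA1]. induction m as [|m [IH0 IH1]]; split; simpl.
  - intros i j _ _. destruct (Nat.eqb i j); lra.
  - intros i Hi.
    rewrite (rsum_ext _ _ (fun j => (if Nat.eqb i j then 1 else 0) * 1))
      by (intros; now rewrite Rmult_1_r).
    apply (rsum_delta_l n i (fun _ => 1) Hi).
  - intros i j Hi Hj. apply rsum_nonneg. intros. apply Rmult_le_pos; auto.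
  - intros i Hi. rewrite rsum_swap.
    rewrite (rsum_ext _ _ (fun k => mpow n A m i k * 1)); [rewrite rsum_scal_r, IH1 by auto; ring|].
    intros k Hk. now rewrite rsum_scal_l, HA1.
Qed.

End MatrixPowers.

Lemma expect_head_weight n v A N F h :
  expect n v A N (fun s => F (nth 0 s 0%nat) * h s) = expect n (fun b => v b * F b) A N h.
Proof.
  unfold expect. f_equal. apply map_ext. intros x. unfold path_prob. ring.
Qed.

Section Chain.
Variable n : nat.
Variable A : nat -> nat -> R.
Hypothesis HA : is_transition n A.

Lemma expect_nth N k v g : (k <= N)%nat ->
  expect n v A N (fun s => g (nth k s 0%nat)) = dot n v (mxv n (mpow n A k) g).
Proof.
  revert k v. induction N as [|N IH]; intros k v Hk.
  - replace k with O by lia. rewrite expect_zero_steps. apply rsum_ext. intros b Hb.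
    now rewrite mxv_mpow_0.
  - rewrite expect_succ. apply rsum_ext. intros a Ha. f_equal. destruct k as [|k].
    + simpl nth. rewrite expect_const, mxv_mpow_0 by auto.
      rewrite transition_row_sum by auto. ring.
    + simpl nth. rewrite IH, mxv_mpow_succ by (auto || lia). reflexivity.
Qed.

Lemma expect_step_nth j k N v D g : (j < k)%nat -> (k <= N)%nat ->
  expect n v A N (fun x => D (nth j x 0%nat) (nth (S j) x 0%nat) * g (nth k x 0%nat)) =
  rsum n (fun a => vmx n v (mpow n A j) a *
                   rsum n (fun b => A a b * D a b * mxv n (mpow n A (k - S j)) g b)).
Proof.
  revert k N v. induction j as [|j IH]; intros k N v Hjk HkN;
    destruct k as [|k]; try lia; destruct N as [|N]; try lia; rewrite expect_succ.
  - apply rsum_ext. intros a Ha. unfold vmx. simpl mpow. rewrite rsum_delta_r by auto.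
    f_equal. simpl nth. rewrite expect_head_weight, expect_nth by lia.
    rewrite Nat.sub_0_r. apply rsum_ext. intros. ring.
  - simpl nth. rewrite (rsum_ext _ _ (fun a => rsum n (fun e => v a * vmx n (A a) (mpow n A j) e *
        rsum n (fun b => A e b * D e b * mxv n (mpow n A (k - S j)) g b))))
      by (intros; rewrite IH, <- rsum_scal_l by lia; apply rsum_ext; intros; ring).
    rewrite rsum_swap. apply rsum_ext. intros e He. rewrite rsum_scal_r. f_equal.
    unfold vmx. apply rsum_ext. intros a Ha. now rewrite mpow_succ_l.
Qed.

Section MeanZeroIncrements.
Variable D : nat -> nat -> R.
Hypothesis HD : forall a, (a < n)%nat -> rsum n (fun b => A a b * D a b) = 0.

Lemma expect_increment_0 m N v : (m < N)%nat ->
  expect n v A N (fun x => D (nth m x 0%nat) (nth (S m) x 0%nat)) = 0.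
Proof.
  intros HmN. rewrite (expect_ext _ _ _ _ _
    (fun x => D (nth m x 0%nat) (nth (S m) x 0%nat) * (fun _ => 1) (nth (S m) x 0%nat)))
    by (intros; ring).
  rewrite (expect_step_nth m (S m) N v D (fun _ => 1)) by lia.
  rewrite <- (rsum_zero n). apply rsum_ext. intros a Ha.
  rewrite Nat.sub_diag, (rsum_ext _ _ (fun b => A a b * D a b)).
  - rewrite HD by auto. ring.
  - intros b Hb. rewrite mxv_mpow_0 by auto. ring.
Qed.

Lemma expect_increments_orthogonal j j' N v : (j < j')%nat -> (j' < N)%nat ->
  expect n v A N (fun x => D (nth j x 0%nat) (nth (S j) x 0%nat) *
                           D (nth j' x 0%nat) (nth (S j') x 0%nat)) = 0.
Proof.
  revert j' N v. induction j as [|j IH]; intros j' N v Hjj' Hj'N;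
    destruct j' as [|j']; try lia; destruct N as [|N]; try lia.
  all: rewrite expect_succ, <- (rsum_zero n); apply rsum_ext; intros a Ha; simpl nth.
  - rewrite (expect_head_weight n (A a) A N (D a)
      (fun s => D (nth j' s 0%nat) (nth (S j') s 0%nat))).
    rewrite expect_increment_0 by lia. ring.
  - rewrite IH by lia. ring.
Qed.

Lemma expect_increment_sum_sqr_le B v k N :
  is_distribution n v -> (forall a b, (a < n)%nat -> (b < n)%nat -> Rabs (D a b) <= B) ->
  (k <= N)%nat ->
  expect n v A N (fun x => Rsqr (rsum k (fun j => D (nth j x 0%nat) (nth (S j) x 0%nat))))
    <= INR k * Rsqr B.
Proof.
  intros [Hv0 Hv1] HB. induction k as [|k IH]; intros Hk.
  - simpl rsum.
    rewrite (expect_ext _ _ _ _ _ (fun _ => 0)), expect_const by (auto || (intros; apply Rsqr_0)).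
    simpl. lra.
  - set (d := fun x (j : nat) => D (nth j x 0%nat) (nth (S j) x 0%nat)).
    rewrite (expect_ext _ _ _ _ _ (fun x => Rsqr (rsum k (d x)) +
                 (2 * rsum k (fun j => d x j * d x k) + Rsqr (d x k))))
      by (intros x; simpl rsum; rewrite rsum_scal_r; unfold d, Rsqr; ring).
    rewrite !expect_add, expect_scal, expect_rsum.
    rewrite (rsum_ext _ _ (fun _ => 0)), rsum_zero
      by (intros j Hj; apply expect_increments_orthogonal; lia).
    assert (Hlast : expect n v A N (fun x => Rsqr (d x k)) <= Rsqr B).
    { rewrite <- (Rmult_1_r (Rsqr B)), <- Hv1, <- (expect_const n v A N (Rsqr B) HA).
      apply expect_le; auto; [apply HA|]. intros x Hx. apply Rsqr_le_abs_1.
      eapply Rle_trans; [apply HB; auto | apply Rle_abs]. }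
    pose proof (IH ltac:(lia)). rewrite S_INR. unfold d in *. lra.
Qed.
End MeanZeroIncrements.

End Chain.

(** * Geometric ergodicity *)

Lemma ex_pos_lower_bound m (f : nat -> R) : (forall i, (i < m)%nat -> 0 < f i) ->
  exists d, 0 < d /\ forall i, (i < m)%nat -> d <= f i.
Proof.
  induction m as [|m IH]; intros H; [exists 1; split; [lra | intros; lia]|].
  destruct IH as [d [Hd Hdf]]; [intros; apply H; lia|].
  exists (Rmin d (f m)). split; [apply Rmin_pos; auto|].
  intros i Hi. destruct (Nat.eq_dec i m) as [->|Him]; [apply Rmin_r|].
  eapply Rle_trans; [apply Rmin_l | apply Hdf; lia].
Qed.

Lemma ex_pos_lower_bound2 m1 m2 (f : nat -> nat -> R) :
  (forall i j, (i < m1)%nat -> (j < m2)%nat -> 0 < f i j) ->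
  exists d, 0 < d /\ forall i j, (i < m1)%nat -> (j < m2)%nat -> d <= f i j.
Proof.
  induction m1 as [|m1 IH]; intros H; [exists 1; split; [lra | intros; lia]|].
  destruct IH as [d [Hd Hdf]]; [intros; apply H; lia|].
  destruct (ex_pos_lower_bound m2 (f m1)) as [e [He Hef]]; [intros; apply H; lia|].
  exists (Rmin d e). split; [apply Rmin_pos; auto|].
  intros i j Hi Hj. destruct (Nat.eq_dec i m1) as [->|Him].
  - eapply Rle_trans; [apply Rmin_r | apply Hef; lia].
  - eapply Rle_trans; [apply Rmin_l | apply Hdf; lia].
Qed.

Lemma pow_one_sub_ge (x : R) m : 0 <= x <= 1 -> 1 - INR m * x <= (1 - x) ^ m.
Proof.
  intros Hx. induction m as [|m IH]; [simpl; lra|]. rewrite S_INR. simpl.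
  assert (0 <= x * INR m * x) by (pose proof (pos_INR m); apply Rmult_le_pos; nra). nra.
Qed.

(* Witness [rho = 1 - (1 - r) / M]: Bernoulli's inequality gives [rho ^ M >= r]. *)
Lemma geometric_of_block_decay (r : R) M : 0 < r < 1 -> (0 < M)%nat ->
  exists C rho, 0 <= C /\ 0 < rho < 1 /\ forall k, r ^ (k / M) <= C * rho ^ k.
Proof.
  intros Hr HM. assert (HMR : 1 <= INR M) by (apply (le_INR 1); lia).
  set (rho := 1 - (1 - r) / INR M).
  assert (Hx : 0 < (1 - r) / INR M < 1).
  { split; [apply Rdiv_lt_0_compat; lra|].
    apply Rmult_lt_reg_r with (INR M); [lra|]. unfold Rdiv. rewrite Rmult_assoc, Rinv_l; lra. }
  assert (Hrho : 0 < rho < 1) by (unfold rho; lra).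
  assert (HrM : r <= rho ^ M).
  { eapply Rle_trans; [|apply pow_one_sub_ge; lra].
    replace (INR M * ((1 - r) / INR M)) with (1 - r) by (field; lra). lra. }
  pose proof (pow_lt rho M ltac:(lra)).
  exists (/ rho ^ M), rho. split; [left; now apply Rinv_0_lt_compat|]. split; [auto|].
  intros k. set (q := (k / M)%nat).
  assert (Hk : (M * q + M >= k)%nat)
    by (pose proof (Nat.mul_succ_div_gt k M ltac:(lia)); unfold q; lia).
  apply Rle_trans with (rho ^ (M * q)); [rewrite pow_mult; apply pow_incr; lra|].
  apply Rmult_le_reg_l with (rho ^ M); auto.
  rewrite <- Rmult_assoc, Rinv_r, Rmult_1_l, <- pow_add by lra.
  apply Rle_pow_le1; [lra | lia].
Qed.

Definition osc n (f : nat -> R) (d : R) : Prop :=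
  forall i i', (i < n)%nat -> (i' < n)%nat -> f i - f i' <= d.

Lemma osc_contraction n (M : nat -> nat -> R) (d0 : R) (f : nat -> R) (d : R) :
  (0 < n)%nat -> is_transition n M -> 0 < d0 ->
  (forall i j, (i < n)%nat -> (j < n)%nat -> d0 <= M i j) ->
  osc n f d -> osc n (mxv n M f) ((1 - INR n * d0 / 2) * d).
Proof.
  intros Hn [_ HM1] Hd0 HM Hf. set (r := 1 - INR n * d0 / 2).
  assert (Hnd : INR n * d0 <= 1).
  { rewrite <- (HM1 0%nat Hn), <- rsum_const. apply rsum_le. intros; apply HM; auto. }
  assert (Hr : 0 < r) by (unfold r; lra).
  (* each row is [d0 / 2] everywhere plus a nonnegative remainder [B] of mass [r] *)
  set (B := fun i m => M i m - d0 / 2).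
  assert (HB : forall i, (i < n)%nat -> rsum n (B i) = r).
  { intros i Hi. unfold B. rewrite rsum_sub, HM1, rsum_const by auto. unfold r; lra. }
  assert (HB0 : forall i m, (i < n)%nat -> (m < n)%nat -> 0 <= B i m)
    by (intros i m Hi Hm; pose proof (HM i m Hi Hm); unfold B; lra).
  assert (HMf : forall i, mxv n M f i = d0 / 2 * rsum n f + mxv n B f i).
  { intros i. unfold mxv. rewrite <- rsum_scal_l, <- rsum_add.
    apply rsum_ext. intros. unfold B; ring. }
  intros i i' Hi Hi'. rewrite !HMf.
  assert (Hprod : r * (mxv n B f i - mxv n B f i') =
                  rsum n (fun m => rsum n (fun m' => B i m * B i' m' * (f m - f m')))).
  { rewrite (rsum_ext _ _ (fun m => r * (B i m * f m) - B i m * mxv n B f i')).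
    - rewrite rsum_sub, rsum_scal_l, rsum_scal_r, HB by auto. unfold mxv. ring.
    - intros m Hm. unfold mxv.
      rewrite (rsum_ext _ _ (fun m' => B i m * f m * B i' m' - B i m * (B i' m' * f m')))
        by (intros; ring).
      rewrite rsum_sub, rsum_scal_l, rsum_scal_l, HB by auto. ring. }
  assert (Hle : rsum n (fun m => rsum n (fun m' => B i m * B i' m' * (f m - f m'))) <= r * (r * d)).
  { apply Rle_trans with (rsum n (fun m => rsum n (fun m' => B i m * B i' m' * d))).
    - apply rsum_le; intros m Hm; apply rsum_le; intros m' Hm'.
      apply Rmult_le_compat_l; [apply Rmult_le_pos|apply Hf]; auto.
    - rewrite (rsum_ext _ _ (fun m => B i m * (r * d))); [rewrite rsum_scal_r, HB by auto; lra|].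
      intros m Hm. rewrite (rsum_ext _ _ (fun m' => B i m * d * B i' m')) by (intros; ring).
      rewrite rsum_scal_l, HB by auto. ring. }
  apply Rmult_le_reg_l with r; auto. fold r. nra.
Qed.

Section Ergodicity.
Variable n : nat.
Variable A : nat -> nat -> R.
Variable pi : nat -> R.
Hypothesis Hn : (0 < n)%nat.
Hypothesis HA : is_transition n A.
Hypothesis Hpi : is_stationary n A pi.

Lemma mpow_sub_stationary_le k i j d : (i < n)%nat -> (j < n)%nat ->
  osc n (fun i => mpow n A k i j) d -> Rabs (mpow n A k i j - pi j) <= d.
Proof.
  intros Hi Hj Hosc. destruct Hpi as [[Hp0 Hp1] _].
  rewrite <- (stationary_mpow n A pi k j Hpi Hj). unfold vmx.
  replace (mpow n A k i j - rsum n (fun i0 => pi i0 * mpow n A k i0 j))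
    with (rsum n (fun i0 => pi i0 * (mpow n A k i j - mpow n A k i0 j)))
    by (rewrite (rsum_ext _ _ (fun i0 => mpow n A k i j * pi i0 - pi i0 * mpow n A k i0 j))
          by (intros; ring); rewrite rsum_sub, rsum_scal_l, Hp1; ring).
  eapply Rle_trans; [apply rsum_abs_le|].
  apply Rle_trans with (rsum n (fun i0 => pi i0 * d)); [|rewrite rsum_scal_r, Hp1; lra].
  apply rsum_le. intros i0 Hi0. rewrite Rabs_mult, (Rabs_pos_eq (pi i0)) by auto.
  apply Rmult_le_compat_l; auto. apply Rabs_le.
  pose proof (Hosc i i0 Hi Hi0). pose proof (Hosc i0 i Hi0 Hi). lra.
Qed.

Lemma mpow_column_osc_le M d0 j q k : 0 < d0 ->
  (forall i j, (i < n)%nat -> (j < n)%nat -> d0 <= mpow n A M i j) ->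
  (j < n)%nat -> (q * M <= k)%nat ->
  osc n (fun i => mpow n A k i j) ((1 - INR n * d0 / 2) ^ q).
Proof.
  intros Hd0 HMd0 Hj. revert k. induction q as [|q IH]; intros k Hk.
  - intros i i' Hi Hi'. simpl.
    pose proof (transition_entry_bounds n _ i j (is_transition_mpow n A HA k) Hi Hj).
    pose proof (transition_entry_bounds n _ i' j (is_transition_mpow n A HA k) Hi' Hj). lra.
  - replace k with (M + (k - M))%nat by (simpl in Hk; lia).
    intros i i' Hi Hi'. rewrite !mpow_add by auto.
    apply (osc_contraction n (mpow n A M) d0 (fun m => mpow n A (k - M) m j));
      auto using is_transition_mpow.
    apply IH. simpl in Hk; lia.
Qed.

Hypothesis Hreg : regular n A.

Theorem mpow_geometric_convergence : exists C rho, 0 <= C /\ 0 < rho < 1 /\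
  forall k i j, (i < n)%nat -> (j < n)%nat -> Rabs (mpow n A k i j - pi j) <= C * rho ^ k.
Proof.
  destruct Hreg as [M HM].
  destruct (ex_pos_lower_bound2 n n (mpow n A M) HM) as [d0 [Hd0 HMd0]].
  (* one more step makes the block length positive while keeping the entries [>= d0] *)
  assert (HM1 : forall i j, (i < n)%nat -> (j < n)%nat -> d0 <= mpow n A (S M) i j).
  { intros i j Hi Hj. rewrite mpow_succ_l by auto.
    apply Rle_trans with (rsum n (fun k => A i k * d0));
      [rewrite rsum_scal_r, transition_row_sum by auto; lra|].
    apply rsum_le. intros. apply Rmult_le_compat_l; auto. apply HA; auto. }
  assert (Hr : 0 < 1 - INR n * d0 / 2 < 1).
  { assert (INR n * d0 <= 1).
    { rewrite <- (proj2 (is_transition_mpow n A HA (S M)) 0%nat Hn), <- rsum_const.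
      apply rsum_le. intros; apply HM1; auto. }
    assert (1 <= INR n) by (apply (le_INR 1); lia). nra. }
  destruct (geometric_of_block_decay _ (S M) Hr ltac:(lia)) as [C [rho [HC [Hrho Hdecay]]]].
  exists C, rho. repeat split; auto; try lra. intros k i j Hi Hj.
  eapply Rle_trans; [|apply Hdecay]. apply mpow_sub_stationary_le; auto.
  apply (mpow_column_osc_le (S M)); auto. rewrite Nat.mul_comm. apply Nat.Div0.mul_div_le.
Qed.
End Ergodicity.

(** * The Poisson equation *)

Lemma series_geometric_le (u : nat -> R) B rho : 0 <= rho < 1 ->
  (forall m, Rabs (u m) <= B * rho ^ m) -> ex_series u /\ Rabs (Series u) <= B / (1 - rho).
Proof.
  intros Hr Hu.
  assert (Hg : is_series (fun m => B * rho ^ m) (B / (1 - rho))).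
  { apply (is_series_scal_l B (fun m => rho ^ m)). apply is_series_geom. rewrite Rabs_pos_eq; lra. }
  assert (Habs : ex_series (fun m => Rabs (u m))).
  { apply (@ex_series_le R_AbsRing R_CompleteNormedModule _ (fun m => B * rho ^ m));
      [|exists (B / (1 - rho)); auto].
    intros m. change (norm (Rabs (u m))) with (Rabs (Rabs (u m))). now rewrite Rabs_Rabsolu. }
  split; [now apply ex_series_Rabs|].
  eapply Rle_trans; [now apply Series_Rabs|].
  rewrite <- (is_series_unique _ _ Hg). apply Series_le; [|exists (B / (1 - rho)); auto].
  intros m. split; auto. apply Rabs_pos.
Qed.

Lemma series_tail_le (u : nat -> R) B rho : 0 <= rho < 1 ->
  (forall m, Rabs (u m) <= B * rho ^ m) ->
  forall K, Rabs (Series u - rsum K u) <= B * rho ^ K / (1 - rho).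
Proof.
  intros Hr Hu K. destruct (series_geometric_le u B rho Hr Hu) as [Hex _].
  assert (E : Series u = rsum K u + Series (fun k => u (K + k)%nat)).
  { destruct K as [|K]; [simpl; rewrite Rplus_0_l; now apply Series_ext|].
    rewrite (Series_incr_n u (S K)) by (auto; lia). simpl pred. f_equal.
    clear. induction K as [|K IH]; [simpl; lra|]. simpl sum_f_R0. now rewrite IH. }
  rewrite E. replace (rsum K u + Series (fun k => u (K + k)%nat) - rsum K u)
    with (Series (fun k => u (K + k)%nat)) by ring.
  apply series_geometric_le; auto. intros m. rewrite Rmult_assoc, <- pow_add. auto.
Qed.

Lemma is_series_rsum k (u : nat -> nat -> R) (l : nat -> R) :
  (forall a, (a < k)%nat -> is_series (u a) (l a)) ->
  is_series (fun m => rsum k (fun a => u a m)) (rsum k l).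
Proof.
  induction k as [|k IH]; intros H; simpl.
  - assert (Hgeom : is_series (fun m => (1 / 2) ^ m) (/ (1 - 1 / 2)))
      by (apply is_series_geom; rewrite Rabs_pos_eq; lra).
    pose proof (is_series_scal_l 0 _ _ Hgeom) as H0. rewrite Rmult_0_l in H0.
    apply (is_series_ext _ _ _ (fun m => Rmult_0_l _) H0).
  - apply (is_series_plus (fun m => rsum k (fun a => u a m)) (u k)).
    + apply IH. intros; apply H; lia.
    + apply H; lia.
Qed.

Definition norm1 n (g : nat -> R) : R := rsum n (fun e => Rabs (g e)).

Lemma norm1_nonneg n g : 0 <= norm1 n g.
Proof. apply rsum_nonneg. intros. apply Rabs_pos. Qed.

Lemma Rabs_le_norm1 n g e : (e < n)%nat -> Rabs (g e) <= norm1 n g.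
Proof. intros He. apply (rsum_term_le n (fun e => Rabs (g e))); auto. intros; apply Rabs_pos. Qed.

(* [deviation m b] is [E_b g(x_m) - pi g]. *)
Definition deviation n (P : nat -> nat -> R) (pi g : nat -> R) (m b : nat) : R :=
  mxv n (mpow n P m) g b - dot n pi g.

Definition poisson n (P : nat -> nat -> R) (pi g : nat -> R) (b : nat) : R :=
  Series (fun m => deviation n P pi g m b).

Section Poisson.
Variable n : nat.
Variable P : nat -> nat -> R.
Variable pi : nat -> R.
Variables C rho : R.
Hypothesis HP : is_transition n P.
Hypothesis Hrho : 0 < rho < 1.
Hypothesis Hgeo : forall k i j, (i < n)%nat -> (j < n)%nat ->
  Rabs (mpow n P k i j - pi j) <= C * rho ^ k.

Lemma deviation_le g m b : (b < n)%nat ->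
  Rabs (deviation n P pi g m b) <= C * norm1 n g * rho ^ m.
Proof.
  intros Hb. unfold deviation, mxv, dot, norm1. rewrite <- rsum_sub.
  eapply Rle_trans; [apply rsum_abs_le|]. rewrite <- rsum_scal_l, <- rsum_scal_r.
  apply rsum_le. intros e He.
  rewrite <- Rmult_minus_distr_r, Rabs_mult.
  replace (C * Rabs (g e) * rho ^ m) with (C * rho ^ m * Rabs (g e)) by ring.
  apply Rmult_le_compat_r; auto using Rabs_pos.
Qed.

Lemma poisson_tail_le g b K : (b < n)%nat ->
  Rabs (poisson n P pi g b - rsum K (fun m => deviation n P pi g m b))
    <= C * norm1 n g * rho ^ K / (1 - rho).
Proof. intros Hb. apply series_tail_le; [lra|]. intros; now apply deviation_le. Qed.

Lemma is_series_deviation g b : (b < n)%nat ->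
  is_series (fun m => deviation n P pi g m b) (poisson n P pi g b).
Proof.
  intros Hb. apply Series_correct.
  apply (series_geometric_le _ (C * norm1 n g) rho); [lra|]. intros; now apply deviation_le.
Qed.

Lemma poisson_equation g b : (b < n)%nat ->
  poisson n P pi g b = g b - dot n pi g + mxv n P (poisson n P pi g) b.
Proof.
  intros Hb. unfold poisson at 1.
  rewrite Series_incr_1 by (eexists; now apply is_series_deviation).
  unfold deviation at 1. rewrite mxv_mpow_0 by auto. f_equal.
  apply is_series_unique.
  apply (is_series_ext (fun m => rsum n (fun a => P b a * deviation n P pi g m a))).
  - intros m. unfold deviation. rewrite mxv_mpow_succ by auto.
    rewrite (rsum_ext _ _ (fun a => P b a * mxv n (mpow n P m) g a - dot n pi g * P b a))
      by (intros; ring).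
    now rewrite rsum_sub, rsum_scal_l, transition_row_sum, Rmult_1_r.
  - apply is_series_rsum. intros a Ha.
    exact (is_series_scal_l (P b a) _ _ (is_series_deviation g a Ha)).
Qed.

Lemma stationary_perturbation (Q : nat -> nat -> R) (pi' g : nat -> R) :
  is_stationary n Q pi' ->
  dot n pi' g - dot n pi g =
  rsum n (fun a => pi' a * rsum n (fun b => (Q a b - P a b) * poisson n P pi g b)).
Proof.
  intros [[_ Hsum] Hstat]. set (h := poisson n P pi g).
  rewrite (rsum_ext _ _ (fun a => rsum n (fun b => pi' a * Q a b * h b) -
                                  pi' a * (h a - g a + dot n pi g))).
  - rewrite rsum_sub, rsum_swap.
    rewrite (rsum_ext _ (fun b => rsum n (fun a => pi' a * Q a b * h b)) (fun b => pi' b * h b))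
      by (intros b Hb; now rewrite rsum_scal_r, Hstat).
    rewrite (rsum_ext _ (fun a => pi' a * (h a - g a + dot n pi g))
                        (fun a => pi' a * h a - pi' a * g a + dot n pi g * pi' a))
      by (intros; ring).
    rewrite !rsum_add, rsum_sub, rsum_scal_l, Hsum. unfold dot. ring.
  - intros a Ha.
    replace (h a - g a + dot n pi g) with (mxv n P h a)
      by (unfold h; rewrite (poisson_equation g a Ha) at 1; ring).
    unfold mxv. rewrite <- !rsum_scal_l, <- rsum_sub. apply rsum_ext. intros. ring.
Qed.
End Poisson.

(** * Differentiating the stationary distribution *)

Lemma continuity_pt_near f x : continuity_pt f x ->
  forall eps, 0 < eps -> exists delta, 0 < delta /\
    forall y, Rabs (y - x) < delta -> Rabs (f y - f x) < eps.
Proof.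
  intros Hf eps Heps. destruct (Hf eps Heps) as [alp [Halp Hnear]].
  exists alp. split; auto. intros y Hy. destruct (Req_dec y x) as [->|Hyx].
  - rewrite Rminus_diag, Rabs_R0. lra.
  - apply (Hnear y). repeat split; auto.
Qed.

Lemma continuity_pt_squeeze f g x delta : 0 < delta ->
  (forall y, Rabs (y - x) < delta -> Rabs (f y - f x) <= g y) ->
  continuity_pt g x -> g x = 0 -> continuity_pt f x.
Proof.
  intros Hdelta Hfg Hg Hg0 eps Heps.
  destruct (continuity_pt_near g x Hg eps Heps) as [alp [Halp Hnear]].
  exists (Rmin delta alp). split; [now apply Rmin_pos|].
  intros y [_ Hy]. simpl in Hy |- *. unfold R_dist in Hy |- *.
  pose proof (Rmin_l delta alp). pose proof (Rmin_r delta alp).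
  specialize (Hnear y ltac:(lra)). rewrite Hg0, Rminus_0_r in Hnear.
  eapply Rle_lt_trans; [apply Hfg; lra|]. eapply Rle_lt_trans; [apply Rle_abs | exact Hnear].
Qed.

Lemma continuity_pt_rsum m (F : nat -> R -> R) x :
  (forall k, (k < m)%nat -> continuity_pt (F k) x) ->
  continuity_pt (fun t => rsum m (fun k => F k t)) x.
Proof.
  induction m as [|m IH]; intros H; simpl.
  - now apply continuity_pt_const.
  - apply (continuity_pt_plus (fun t => rsum m (fun k => F k t)) (F m)).
    + apply IH. intros; apply H; lia.
    + apply H; lia.
Qed.

Lemma derivable_pt_lim_rsum m (F : nat -> R -> R) (d : nat -> R) x :
  (forall k, (k < m)%nat -> derivable_pt_lim (F k) x (d k)) ->
  derivable_pt_lim (fun t => rsum m (fun k => F k t)) x (rsum m d).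
Proof.
  induction m as [|m IH]; intros H; simpl.
  - apply derivable_pt_lim_const.
  - apply (derivable_pt_lim_plus (fun t => rsum m (fun k => F k t)) (F m)).
    + apply IH. intros; apply H; lia.
    + apply H; lia.
Qed.

Lemma derivable_pt_lim_mult_vanishing (u h : R -> R) x d :
  continuity_pt u x -> h x = 0 -> derivable_pt_lim h x d ->
  derivable_pt_lim (fun t => u t * h t) x (u x * d).
Proof.
  intros Hu Hh0 Hh eps Heps.
  set (K := Rabs (u x) + 1). set (e2 := Rmin 1 (eps / (2 * (Rabs d + 1)))).
  assert (HK : 0 < K) by (unfold K; pose proof (Rabs_pos (u x)); lra).
  assert (He2 : 0 < e2)
    by (apply Rmin_pos; [lra | apply Rdiv_lt_0_compat; pose proof (Rabs_pos d); lra]).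
  destruct (Hh (eps / (2 * K)) ltac:(apply Rdiv_lt_0_compat; lra)) as [d1 Hd1].
  destruct (continuity_pt_near u x Hu e2 He2) as [d2 [Hd2 Hu2]].
  assert (Hdelta : 0 < Rmin d1 d2) by (apply Rmin_pos; [apply cond_pos | auto]).
  exists (mkposreal _ Hdelta). intros t Ht0 Ht. simpl in Ht.
  pose proof (Rmin_l d1 d2). pose proof (Rmin_r d1 d2).
  specialize (Hd1 t Ht0 ltac:(lra)). rewrite Hh0, Rminus_0_r in Hd1.
  specialize (Hu2 (x + t) ltac:(replace (x + t - x) with t by ring; lra)).
  replace ((u (x + t) * h (x + t) - u x * h x) / t - u x * d)
    with (u (x + t) * (h (x + t) / t - d) + (u (x + t) - u x) * d) by (rewrite Hh0; field; auto).
  eapply Rle_lt_trans; [apply Rabs_triang|]. rewrite !Rabs_mult.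
  assert (Hux : Rabs (u (x + t)) <= K).
  { pose proof (Rabs_triang_inv (u (x + t)) (u x)). assert (e2 <= 1) by apply Rmin_l.
    unfold K. lra. }
  assert (Hterm1 : Rabs (u (x + t)) * Rabs (h (x + t) / t - d) < K * (eps / (2 * K))).
  { apply Rle_lt_trans with (K * Rabs (h (x + t) / t - d)).
    - apply Rmult_le_compat_r; auto using Rabs_pos.
    - apply Rmult_lt_compat_l; auto. }
  assert (Hterm2 : Rabs (u (x + t) - u x) * Rabs d <= eps / (2 * (Rabs d + 1)) * (Rabs d + 1)).
  { assert (e2 <= eps / (2 * (Rabs d + 1))) by apply Rmin_r.
    apply Rmult_le_compat; auto using Rabs_pos; lra. }
  replace (K * (eps / (2 * K))) with (eps / 2) in Hterm1 by (field; lra).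
  replace (eps / (2 * (Rabs d + 1)) * (Rabs d + 1)) with (eps / 2) in Hterm2
    by (field; pose proof (Rabs_pos d); lra).
  lra.
Qed.

Lemma derivable_pt_lim_of_local_increment (F G : R -> R) x L delta : 0 < delta ->
  (forall y, Rabs (y - x) < delta -> F y - F x = G y) -> G x = 0 ->
  derivable_pt_lim G x L -> derivable_pt_lim F x L.
Proof.
  intros Hdelta HFG HG0 HG eps Heps. destruct (HG eps Heps) as [d Hd].
  assert (Hmin : 0 < Rmin d delta) by (apply Rmin_pos; [apply cond_pos | auto]).
  exists (mkposreal _ Hmin). intros t Ht0 Ht. simpl in Ht.
  pose proof (Rmin_l d delta). pose proof (Rmin_r d delta).
  rewrite HFG by (replace (x + t - x) with t by ring; lra).
  rewrite <- (Rminus_0_r (G (x + t))), <- HG0. apply Hd; auto; lra.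
Qed.

Section StationaryDerivative.
Variable n : nat.
Variable Pt : R -> nat -> nat -> R.
Variable pit : R -> nat -> R.
Variable dP : nat -> nat -> R.
Variables C rho eps0 : R.
Hypothesis Heps0 : 0 < eps0.
Hypothesis Hstat : forall t, Rabs t < eps0 -> is_stationary n (Pt t) (pit t).
Hypothesis HP0 : is_transition n (Pt 0).
Hypothesis Hrho : 0 < rho < 1.
Hypothesis Hgeo : forall k i j, (i < n)%nat -> (j < n)%nat ->
  Rabs (mpow n (Pt 0) k i j - pit 0 j) <= C * rho ^ k.
Hypothesis HdP : forall a b, (a < n)%nat -> (b < n)%nat ->
  derivable_pt_lim (fun t => Pt t a b) 0 (dP a b).

Let h := poisson n (Pt 0) (pit 0).

Lemma stationary_increment g t : Rabs t < eps0 ->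
  dot n (pit t) g - dot n (pit 0) g =
  rsum n (fun a => pit t a * rsum n (fun b => (Pt t a b - Pt 0 a b) * h g b)).
Proof.
  intros Ht.
  exact (stationary_perturbation n (Pt 0) (pit 0) C rho HP0 Hrho Hgeo _ _ g (Hstat t Ht)).
Qed.

Lemma continuity_pt_entry_increment a b : (a < n)%nat -> (b < n)%nat ->
  continuity_pt (fun t => Pt t a b - Pt 0 a b) 0.
Proof.
  intros Ha Hb. apply (continuity_pt_minus (fun t => Pt t a b) (fun _ => Pt 0 a b)).
  - apply derivable_continuous_pt. exists (dP a b). now apply HdP.
  - now apply continuity_pt_const.
Qed.

(* [pit t j] is [pit t] applied to the unit vector [e_j]: bound its increment by the
   perturbation identity. *)
Lemma stationary_continuous j : (j < n)%nat -> continuity_pt (fun t => pit t j) 0.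
Proof.
  intros Hj. set (e := fun i : nat => if Nat.eqb i j then 1 else 0).
  apply (continuity_pt_squeeze _
    (fun t => rsum n (fun a => rsum n (fun b => Rabs (Pt t a b - Pt 0 a b) * Rabs (h e b))))
    0 eps0); auto.
  - intros y Hy. rewrite Rminus_0_r in Hy.
    replace (pit y j - pit 0 j) with (dot n (pit y) e - dot n (pit 0) e)
      by (unfold dot, e; now rewrite !rsum_delta_r).
    rewrite stationary_increment by auto.
    eapply Rle_trans; [apply rsum_abs_le|]. apply rsum_le. intros a Ha.
    destruct (distribution_entry_bounds n (pit y) a (proj1 (Hstat y Hy)) Ha).
    rewrite Rabs_mult, Rabs_pos_eq by auto.
    apply Rle_trans with (1 * Rabs (rsum n (fun b => (Pt y a b - Pt 0 a b) * h e b)));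
      [apply Rmult_le_compat_r; auto using Rabs_pos|].
    rewrite Rmult_1_l. eapply Rle_trans; [apply rsum_abs_le|].
    apply rsum_le. intros. rewrite Rabs_mult. lra.
  - apply continuity_pt_rsum. intros a Ha. apply continuity_pt_rsum. intros b Hb.
    apply (continuity_pt_mult (fun t => Rabs (Pt t a b - Pt 0 a b)) (fun _ => Rabs (h e b)));
      [|now apply continuity_pt_const].
    apply (continuity_pt_comp (fun t => Pt t a b - Pt 0 a b) Rabs);
      [now apply continuity_pt_entry_increment | apply Rcontinuity_abs].
  - rewrite <- (rsum_zero n). apply rsum_ext. intros a _. rewrite <- (rsum_zero n).
    apply rsum_ext. intros b _. rewrite Rminus_diag, Rabs_R0. ring.
Qed.

Theorem stationary_cost_derivative g :
  derivable_pt_lim (fun t => dot n (pit t) g) 0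
    (rsum n (fun a => pit 0 a * rsum n (fun b => dP a b * h g b))).
Proof.
  apply (derivable_pt_lim_of_local_increment _
    (fun t => rsum n (fun a => rsum n (fun b => pit t a * ((Pt t a b - Pt 0 a b) * h g b))))
    0 _ eps0); auto.
  - intros y Hy. rewrite Rminus_0_r in Hy. rewrite stationary_increment by auto.
    apply rsum_ext. intros. now rewrite rsum_scal_l.
  - rewrite <- (rsum_zero n). apply rsum_ext. intros a _. rewrite <- (rsum_zero n).
    apply rsum_ext. intros b _. rewrite Rminus_diag. ring.
  - rewrite (rsum_ext _ _ (fun a => rsum n (fun b => pit 0 a * ((dP a b - 0) * h g b))))
      by (intros; rewrite <- rsum_scal_l; apply rsum_ext; intros; ring).
    apply derivable_pt_lim_rsum. intros a Ha. apply derivable_pt_lim_rsum. intros b Hb.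
    apply (derivable_pt_lim_mult_vanishing (fun t => pit t a)
             (fun t => (Pt t a b - Pt 0 a b) * h g b)).
    + now apply stationary_continuous.
    + rewrite Rminus_diag. ring.
    + apply derivable_pt_lim_scal_right.
      apply (derivable_pt_lim_minus (fun t => Pt t a b) (fun _ => Pt 0 a b));
        [now apply HdP | apply derivable_pt_lim_const].
Qed.
End StationaryDerivative.

(** * Bias and variance of the score function estimator *)

Lemma estimator_expand c A dA N x l :
  estimator c A dA N x l = / INR N * rsum N (fun k => rsum (S k) (fun j =>
    dA (nth j x 0%nat) (nth (S j) x 0%nat) l / A (nth j x 0%nat) (nth (S j) x 0%nat) *
    c (nth (S k) x 0%nat))).
Proof.
  unfold estimator, score. f_equal. apply rsum_ext. intros.
  now rewrite Rmult_comm, <- rsum_scal_r.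
Qed.

Lemma sqrt_rsum_sqr_le m (x : nat -> R) :
  sqrt (rsum m (fun l => Rsqr (x l))) <= rsum m (fun l => Rabs (x l)).
Proof.
  assert (Hpos : 0 <= rsum m (fun l => Rabs (x l))) by (apply rsum_nonneg; intros; apply Rabs_pos).
  rewrite <- (sqrt_Rsqr _ Hpos). apply sqrt_le_1_alt.
  induction m as [|m IH]; simpl rsum; [unfold Rsqr; lra|].
  assert (0 <= rsum m (fun l => Rabs (x l))) by (apply rsum_nonneg; intros; apply Rabs_pos).
  specialize (IH H). rewrite Rsqr_plus, <- Rsqr_abs.
  pose proof (Rabs_pos (x m)).
  assert (0 <= 2 * rsum m (fun l => Rabs (x l)) * Rabs (x m)) by nra. lra.
Qed.

Section Estimator.
Variables n p : nat.
Variable P : nat -> nat -> R.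
Variable dP : nat -> nat -> nat -> R.
Variables pi pi0 c : nat -> R.
Variables C rho : R.
Hypothesis HP : is_transition n P.
Hypothesis Hpi : is_distribution n pi.
Hypothesis Hpi0 : is_distribution n pi0.
Hypothesis Hrho : 0 < rho < 1.
Hypothesis HC : 0 <= C.
Hypothesis Hgeo : forall k i j, (i < n)%nat -> (j < n)%nat ->
  Rabs (mpow n P k i j - pi j) <= C * rho ^ k.
Hypothesis HdP_div : forall a b l, (a < n)%nat -> (b < n)%nat -> (l < p)%nat ->
  P a b * (dP a b l / P a b) = dP a b l.
Hypothesis HdP_row : forall a l, (a < n)%nat -> (l < p)%nat -> rsum n (fun b => dP a b l) = 0.

(* The gradient [pi (dP / dth_l) h] of [c' pi_th], with [h] the Poisson solution for [c]. *)
Definition grad l := rsum n (fun a => pi a * rsum n (fun b => dP a b l * poisson n P pi c b)).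

(* For [v] the law of [x_j], [score_cov l v m] is the correlation of the score increment
   at step [j] with [c (x_(j+m+1))]. *)
Definition score_cov l (v : nat -> R) m :=
  rsum n (fun a => v a * rsum n (fun b => dP a b l * deviation n P pi c m b)).

Definition dP_norm l := rsum n (fun a => rsum n (fun b => Rabs (dP a b l))).

Lemma dP_norm_nonneg l : 0 <= dP_norm l.
Proof. apply rsum_nonneg; intros; apply rsum_nonneg; intros; apply Rabs_pos. Qed.

Lemma expect_score_term l j k N : (l < p)%nat -> (j <= k)%nat -> (k < N)%nat ->
  expect n pi0 P N (fun x => dP (nth j x 0%nat) (nth (S j) x 0%nat) l /
                               P (nth j x 0%nat) (nth (S j) x 0%nat) * c (nth (S k) x 0%nat))
  = score_cov l (vmx n pi0 (mpow n P j)) (k - j).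
Proof.
  intros Hl Hjk HkN.
  rewrite (expect_step_nth n P HP j (S k) N pi0 (fun a b => dP a b l / P a b) c) by lia.
  apply rsum_ext. intros a Ha. f_equal. replace (S k - S j)%nat with (k - j)%nat by lia.
  transitivity (rsum n (fun b => dP a b l * mxv n (mpow n P (k - j)) c b)).
  - apply rsum_ext. intros b Hb. now rewrite HdP_div.
  - unfold deviation.
    rewrite (rsum_ext _ (fun b => dP a b l * (_ - dot n pi c))
                        (fun b => dP a b l * mxv n (mpow n P (k - j)) c b - dot n pi c * dP a b l))
      by (intros; ring).
    rewrite rsum_sub, rsum_scal_l, HdP_row by auto. ring.
Qed.

(* [score_conv l k] is [E c(x_(k+1)) S_(k+1)]. *)
Definition score_conv l k := rsum (S k) (fun j => score_cov l (vmx n pi0 (mpow n P j)) (k - j)).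

Lemma expect_estimator l N : (l < p)%nat ->
  expect n pi0 P N (fun x => estimator c P dP N x l) = / INR N * rsum N (score_conv l).
Proof.
  intros Hl. rewrite (expect_ext _ _ _ _ _ _ (fun x => estimator_expand c P dP N x l)).
  rewrite expect_scal, expect_rsum. f_equal. apply rsum_ext. intros k Hk.
  rewrite expect_rsum. apply rsum_ext. intros j Hj. apply expect_score_term; lia.
Qed.

Lemma vmx_sub_stationary_le j a : (a < n)%nat ->
  Rabs (vmx n pi0 (mpow n P j) a - pi a) <= C * rho ^ j.
Proof.
  intros Ha. destruct Hpi0 as [H0 H1]. unfold vmx.
  replace (rsum n (fun i => pi0 i * mpow n P j i a) - pi a)
    with (rsum n (fun i => pi0 i * (mpow n P j i a - pi a)))
    by (rewrite (rsum_ext _ _ (fun i => pi0 i * mpow n P j i a - pi a * pi0 i)) by (intros; ring);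
        rewrite rsum_sub, rsum_scal_l, H1; ring).
  eapply Rle_trans; [apply rsum_abs_le|].
  apply Rle_trans with (rsum n (fun i => pi0 i * (C * rho ^ j))); [|rewrite rsum_scal_r, H1; lra].
  apply rsum_le. intros i Hi. rewrite Rabs_mult, (Rabs_pos_eq (pi0 i)) by auto.
  apply Rmult_le_compat_l; auto.
Qed.

Lemma rsum_dP_mult_le l a (w : nat -> R) K : (forall b, (b < n)%nat -> Rabs (w b) <= K) ->
  Rabs (rsum n (fun b => dP a b l * w b)) <= rsum n (fun b => Rabs (dP a b l)) * K.
Proof.
  intros Hw. eapply Rle_trans; [apply rsum_abs_le|]. rewrite <- rsum_scal_r.
  apply rsum_le. intros b Hb. rewrite Rabs_mult. apply Rmult_le_compat_l; auto using Rabs_pos.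
Qed.

Let Cc := C * norm1 n c.

Lemma score_cov_sub_le l j m :
  Rabs (score_cov l (vmx n pi0 (mpow n P j)) m - score_cov l pi m)
    <= C * Cc * dP_norm l * rho ^ (j + m).
Proof.
  unfold score_cov. rewrite <- rsum_sub.
  eapply Rle_trans; [apply rsum_abs_le|]. unfold dP_norm.
  rewrite <- rsum_scal_l, <- rsum_scal_r. apply rsum_le. intros a Ha.
  rewrite <- Rmult_minus_distr_r, Rabs_mult.
  replace (C * Cc * rsum n (fun b => Rabs (dP a b l)) * rho ^ (j + m))
    with (C * rho ^ j * (rsum n (fun b => Rabs (dP a b l)) * (Cc * rho ^ m)))
    by (rewrite pow_add; ring).
  apply Rmult_le_compat; auto using Rabs_pos, vmx_sub_stationary_le.
  apply rsum_dP_mult_le. intros b Hb. now apply deviation_le.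
Qed.

Lemma grad_sub_partial_le l K :
  Rabs (grad l - rsum K (score_cov l pi)) <= dP_norm l * (Cc * rho ^ K / (1 - rho)).
Proof.
  unfold grad, score_cov. rewrite rsum_swap, <- rsum_sub.
  eapply Rle_trans; [apply rsum_abs_le|]. unfold dP_norm. rewrite <- rsum_scal_r.
  apply rsum_le. intros a Ha.
  rewrite rsum_scal_l, <- Rmult_minus_distr_l, Rabs_mult, rsum_swap, <- rsum_sub.
  destruct (distribution_entry_bounds n pi a Hpi Ha) as [Hpa0 Hpa1].
  rewrite Rabs_pos_eq by auto. rewrite <- (Rmult_1_l (_ * (_ / _))).
  apply Rmult_le_compat; auto using Rabs_pos.
  rewrite (rsum_ext _ _ (fun b => dP a b l *
                         (poisson n P pi c b - rsum K (fun m => deviation n P pi c m b))))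
    by (intros; now rewrite Rmult_minus_distr_l, rsum_scal_l).
  apply rsum_dP_mult_le. intros b Hb. now apply poisson_tail_le.
Qed.

Lemma score_conv_sub_grad_le l k :
  Rabs (score_conv l k - grad l)
    <= INR (S k) * (C * Cc * dP_norm l) * rho ^ k + dP_norm l * Cc / (1 - rho) * rho ^ k.
Proof.
  replace (score_conv l k - grad l)
    with (rsum (S k) (fun j => score_cov l (vmx n pi0 (mpow n P j)) (k - j)
                               - score_cov l pi (k - j))
          - (grad l - rsum (S k) (score_cov l pi)))
    by (unfold score_conv; rewrite rsum_sub, <- (rsum_rev k (score_cov l pi)); ring).
  eapply Rle_trans; [apply Rabs_triang|]. rewrite Rabs_Ropp. apply Rplus_le_compat.
  - eapply Rle_trans; [apply rsum_abs_le|]. rewrite Rmult_assoc, <- rsum_const.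
    apply rsum_le. intros j Hj. replace k with (j + (k - j))%nat at 3 by lia.
    apply score_cov_sub_le.
  - eapply Rle_trans; [apply grad_sub_partial_le|].
    pose proof (Rle_pow_le1 rho k (S k) ltac:(lra) ltac:(lia)).
    assert (0 <= dP_norm l * Cc / (1 - rho)).
    { unfold Cc. pose proof (dP_norm_nonneg l). pose proof (norm1_nonneg n c).
      unfold Rdiv. repeat apply Rmult_le_pos; auto. left; apply Rinv_0_lt_compat; lra. }
    replace (dP_norm l * (Cc * rho ^ S k / (1 - rho)))
      with (dP_norm l * Cc / (1 - rho) * rho ^ S k) by (field; lra).
    now apply Rmult_le_compat_l.
Qed.

Definition bias_const l := C * norm1 n c * dP_norm l * (C + 1) / (1 - rho) ^ 2.

Theorem estimator_bias_le l N : (l < p)%nat -> (1 <= N)%nat ->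
  Rabs (expect n pi0 P N (fun x => estimator c P dP N x l) - grad l) <= bias_const l / INR N.
Proof.
  intros Hl HN. assert (HNpos : 0 < INR N) by (apply lt_0_INR; lia).
  rewrite expect_estimator by auto.
  replace (/ INR N * rsum N (score_conv l) - grad l)
    with (/ INR N * rsum N (fun k => score_conv l k - grad l))
    by (rewrite rsum_sub, rsum_const; field; lra).
  rewrite Rabs_mult, Rabs_pos_eq by (left; now apply Rinv_0_lt_compat).
  unfold Rdiv. rewrite (Rmult_comm (bias_const l)).
  apply Rmult_le_compat_l; [left; now apply Rinv_0_lt_compat|].
  eapply Rle_trans; [apply rsum_abs_le|].
  eapply Rle_trans; [apply rsum_le; intros k _; apply score_conv_sub_grad_le|].
  rewrite rsum_add.
  rewrite (rsum_ext _ _ (fun k => C * Cc * dP_norm l * (INR (S k) * rho ^ k))) by (intros; ring).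
  rewrite !rsum_scal_l.
  pose proof (rsum_succ_pow_le rho N ltac:(lra)). pose proof (rsum_pow_le rho N ltac:(lra)).
  pose proof (dP_norm_nonneg l). pose proof (norm1_nonneg n c).
  assert (0 <= C * Cc * dP_norm l) by (unfold Cc; repeat apply Rmult_le_pos; auto).
  assert (0 <= dP_norm l * Cc / (1 - rho))
    by (unfold Cc, Rdiv; repeat apply Rmult_le_pos; auto; left; apply Rinv_0_lt_compat; lra).
  apply Rle_trans
    with (C * Cc * dP_norm l * / (1 - rho) ^ 2 + dP_norm l * Cc / (1 - rho) * / (1 - rho)).
  - apply Rplus_le_compat; now apply Rmult_le_compat_l.
  - unfold bias_const, Cc. right. field. lra.
Qed.

Definition score_norm l := rsum n (fun a => rsum n (fun b => Rabs (dP a b l / P a b))).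

Lemma Rabs_score_le l a b : (a < n)%nat -> (b < n)%nat -> Rabs (dP a b l / P a b) <= score_norm l.
Proof.
  intros Ha Hb. unfold score_norm.
  eapply Rle_trans; [apply (Rabs_le_norm1 n (fun b => dP a b l / P a b) b Hb)|].
  apply (rsum_term_le n (fun a => rsum n (fun b => Rabs (dP a b l / P a b)))); auto.
  intros; apply norm1_nonneg.
Qed.

(* The square of an average is at most the average of the squares, and the score is a
   martingale with increments bounded by [score_norm l]. *)
Theorem estimator_second_moment_le l N : (l < p)%nat -> (1 <= N)%nat ->
  expect n pi0 P N (fun x => Rsqr (estimator c P dP N x l))
    <= Rsqr (norm1 n c) * Rsqr (score_norm l) * INR N.
Proof.
  intros Hl HN. assert (HNpos : 0 < INR N) by (apply lt_0_INR; lia).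
  set (D := fun a b => dP a b l / P a b).
  set (Sc := fun k x => rsum (S k) (fun j => D (nth j x 0%nat) (nth (S j) x 0%nat))).
  assert (Hpoint : forall x, (forall i, (nth i x 0 < n)%nat) -> Rsqr (estimator c P dP N x l)
            <= / INR N * rsum N (fun k => Rsqr (norm1 n c) * Rsqr (Sc k x))).
  { intros x Hx. eapply Rle_trans; [apply Rsqr_mean_le; lia|].
    apply Rmult_le_compat_l; [left; now apply Rinv_0_lt_compat|]. apply rsum_le. intros k Hk.
    rewrite Rsqr_mult. apply Rmult_le_compat_r; [apply Rle_0_sqr|]. apply Rsqr_le_abs_1.
    rewrite (Rabs_pos_eq (norm1 n c)) by apply norm1_nonneg. now apply Rabs_le_norm1. }
  eapply Rle_trans; [apply expect_le; [apply HP | apply Hpi0 | exact Hpoint]|].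
  rewrite expect_scal, expect_rsum.
  apply Rle_trans
    with (/ INR N * rsum N (fun k => Rsqr (norm1 n c) * (INR (S k) * Rsqr (score_norm l)))).
  - apply Rmult_le_compat_l; [left; now apply Rinv_0_lt_compat|]. apply rsum_le. intros k Hk.
    rewrite expect_scal. apply Rmult_le_compat_l; [apply Rle_0_sqr|].
    assert (HD : forall a, (a < n)%nat -> rsum n (fun b => P a b * D a b) = 0).
    { intros a Ha. unfold D.
      rewrite (rsum_ext _ _ (fun b => dP a b l)) by (intros; now apply HdP_div).
      now apply HdP_row. }
    apply (expect_increment_sum_sqr_le n P HP D HD); [apply Hpi0 | | lia].
    intros; now apply Rabs_score_le.
  - rewrite (rsum_ext _ _ (fun k => Rsqr (norm1 n c) * Rsqr (score_norm l) * INR (S k)))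
      by (intros; ring).
    rewrite rsum_scal_l.
    assert (rsum N (fun k => INR (S k)) <= INR N * INR N)
      by (rewrite <- rsum_const; apply rsum_le; intros; apply le_INR; lia).
    assert (0 <= Rsqr (norm1 n c) * Rsqr (score_norm l)) by (apply Rmult_le_pos; apply Rle_0_sqr).
    apply Rle_trans with (/ INR N * (Rsqr (norm1 n c) * Rsqr (score_norm l) * (INR N * INR N)));
      [apply Rmult_le_compat_l; [left; now apply Rinv_0_lt_compat | now apply Rmult_le_compat_l]|].
    right. field. lra.
Qed.

Corollary estimator_bias_norm_le N : (1 <= N)%nat ->
  sqrt (rsum p (fun l => Rsqr (expect n pi0 P N (fun x => estimator c P dP N x l) - grad l)))
    <= rsum p bias_const / INR N.
Proof.
  intros HN. eapply Rle_trans; [apply sqrt_rsum_sqr_le|].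
  unfold Rdiv. rewrite <- rsum_scal_r. apply rsum_le. intros l Hl. now apply estimator_bias_le.
Qed.

Corollary estimator_variance_trace_le N : (1 <= N)%nat ->
  rsum p (fun l => expect n pi0 P N (fun x => Rsqr (estimator c P dP N x l))
                   - Rsqr (expect n pi0 P N (fun x => estimator c P dP N x l)))
    <= rsum p (fun l => Rsqr (norm1 n c) * Rsqr (score_norm l)) * INR N.
Proof.
  intros HN. rewrite <- rsum_scal_r. apply rsum_le. intros l Hl.
  pose proof (estimator_second_moment_le l N Hl HN).
  pose proof (Rle_0_sqr (expect n pi0 P N (fun x => estimator c P dP N x l))). lra.
Qed.
End Estimator.

Lemma Rmult_div_cancel_support x y : (x = 0 -> y = 0) -> x * (y / x) = y.
Proof. intros H. destruct (Req_dec x 0) as [E|E]; [rewrite E, (H E); ring | now field]. Qed.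

Lemma shift_0 th l : shift th l 0 = th.
Proof. apply functional_extensionality. intros m. unfold shift. destruct (Nat.eqb m l); ring. Qed.

Lemma open_Rp_shift p U th : open_Rp p U -> U th ->
  exists eps, 0 < eps /\ forall l t, (l < p)%nat -> Rabs t < eps -> U (shift th l t).
Proof.
  intros [Hin Hopen] Hth. destruct (Hopen th Hth) as [eps [Heps HU]].
  exists eps. split; auto. intros l t Hl Ht. apply HU.
  - intros m Hm. unfold shift. destruct (Nat.eqb_spec m l); [lia|]. now apply (Hin th).
  - intros m Hm. unfold shift. destruct (Nat.eqb m l).
    + now replace (th m + t - th m) with t by ring.
    + rewrite Rminus_diag, Rabs_R0. lra.
Qed.

Section Family.
Variables n p : nat.
Variable U : (nat -> R) -> Prop.
Variable P : (nat -> R) -> nat -> nat -> R.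
Variable dP : (nat -> R) -> nat -> nat -> nat -> R.
Variable th0 : nat -> R.
Variable eps0 : R.
Hypothesis Heps0 : 0 < eps0.
Hypothesis HU : forall l t, (l < p)%nat -> Rabs t < eps0 -> U (shift th0 l t).
Hypothesis Htr : forall th, U th -> is_transition n (P th).
Hypothesis Hder : forall th i j l, U th -> (i < n)%nat -> (j < n)%nat -> (l < p)%nat ->
  derivable_pt_lim (fun t => P (shift th l t) i j) 0 (dP th i j l).

(* Differentiate the constant row sums of [P (shift th0 l t)]. *)
Lemma dP_row_sum a l : (a < n)%nat -> (l < p)%nat -> rsum n (fun b => dP th0 a b l) = 0.
Proof.
  intros Ha Hl. apply (uniqueness_limite (fun t => rsum n (fun b => P (shift th0 l t) a b)) 0).
  - apply (derivable_pt_lim_rsum n (fun b t => P (shift th0 l t) a b)).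
    intros b Hb. apply Hder; auto. rewrite <- (shift_0 th0 l). apply HU; auto. rewrite Rabs_R0; lra.
  - apply (derivable_pt_lim_of_local_increment _ (fun _ => 0) 0 0 eps0); auto.
    + intros y Hy. rewrite Rminus_0_r in Hy. simpl.
      rewrite (proj2 (Htr _ (HU l y Hl Hy)) a Ha),
              (proj2 (Htr _ (HU l 0 Hl ltac:(rewrite Rabs_R0; lra))) a Ha). ring.
    + apply derivable_pt_lim_const.
Qed.

Variable pi : (nat -> R) -> nat -> R.
Variables C rho : R.
Hypothesis Hst : forall th, U th -> is_stationary n (P th) (pi th).
Hypothesis Hrho : 0 < rho < 1.
Hypothesis Hgeo : forall k i j, (i < n)%nat -> (j < n)%nat ->
  Rabs (mpow n (P th0) k i j - pi th0 j) <= C * rho ^ k.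

Lemma stationary_cost_partial c l : (l < p)%nat ->
  derivable_pt_lim (fun t => rsum n (fun i => c i * pi (shift th0 l t) i)) 0
    (grad n (P th0) (dP th0) (pi th0) c l).
Proof.
  intros Hl.
  assert (HUt : forall t, Rabs t < eps0 -> U (shift th0 l t)) by auto.
  assert (HU0 : U (shift th0 l 0)) by (apply HUt; rewrite Rabs_R0; lra).
  pose proof (stationary_cost_derivative n (fun t => P (shift th0 l t))
    (fun t => pi (shift th0 l t)) (fun a b => dP th0 a b l) C rho eps0 Heps0
    (fun t Ht => Hst _ (HUt t Ht)) (Htr _ HU0) Hrho
    ltac:(cbv beta; now rewrite shift_0)) as Hderiv.
  cbv beta in Hderiv. rewrite shift_0 in Hderiv.
  replace (fun t => rsum n (fun i => c i * pi (shift th0 l t) i))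
    with (fun t => dot n (pi (shift th0 l t)) c)
    by (apply functional_extensionality; intros; apply rsum_ext; intros; ring).
  apply Hderiv. intros a b Ha Hb. apply Hder; auto. now rewrite <- (shift_0 th0 l) at 1.
Qed.
End Family.

Theorem theorem2p3
  (n p : nat) (U : (nat -> R) -> Prop)
  (P : (nat -> R) -> nat -> nat -> R)
  (dP : (nat -> R) -> nat -> nat -> nat -> R)
  (pi : (nat -> R) -> nat -> R)
  (c : nat -> R) (pi0 : nat -> R) (th0 : nat -> R) :
  open_Rp p U ->
  (forall th, U th -> is_transition n (P th)) ->
  (forall th, U th -> regular n (P th)) ->
  (forall th, U th -> is_stationary n (P th) (pi th)) ->
  (forall th i j l, U th -> (i < n)%nat -> (j < n)%nat -> (l < p)%nat ->
     derivable_pt_lim (fun t => P (shift th l t) i j) 0 (dP th i j l)) ->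
  (forall th i j l, U th -> (i < n)%nat -> (j < n)%nat -> (l < p)%nat ->
     forall eps, 0 < eps -> exists delta, 0 < delta /\
       forall th', U th' -> close p th th' delta ->
         Rabs (dP th' i j l - dP th i j l) < eps) ->
  (forall th i j l, U th -> (i < n)%nat -> (j < n)%nat -> (l < p)%nat ->
     P th i j = 0 -> dP th i j l = 0) ->
  is_distribution n pi0 ->
  U th0 ->
  exists (g : nat -> R) (K1 K2 : R),
    (forall l, (l < p)%nat ->
       derivable_pt_lim (fun t => rsum n (fun i => c i * pi (shift th0 l t) i)) 0 (g l)) /\
    forall N : nat, (1 <= N)%nat ->
      sqrt (rsum p (fun l =>
              Rsqr (expect n pi0 (P th0) N (fun x => estimator c (P th0) (dP th0) N x l)
                    - g l)))
        <= K1 / INR N /\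
      rsum p (fun l =>
          expect n pi0 (P th0) N (fun x => Rsqr (estimator c (P th0) (dP th0) N x l))
          - Rsqr (expect n pi0 (P th0) N (fun x => estimator c (P th0) (dP th0) N x l)))
        <= K2 * INR N.
Proof.
  intros Hopen Htr Hreg Hst Hder _ Hzero Hpi0 HU0.
  assert (Hn : (0 < n)%nat)
    by (destruct n; [destruct Hpi0 as [_ H1]; simpl in H1; lra | lia]).
  destruct (open_Rp_shift p U th0 Hopen HU0) as [eps0 [Heps0 HU]].
  destruct (mpow_geometric_convergence n (P th0) (pi th0) Hn (Htr _ HU0) (Hst _ HU0) (Hreg _ HU0))
    as [C [rho [HC [Hrho Hgeo]]]].
  pose proof (dP_row_sum n p U P dP th0 eps0 Heps0 HU Htr Hder) as Hrow.
  assert (Hdiv : forall a b l, (a < n)%nat -> (b < n)%nat -> (l < p)%nat ->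
                   P th0 a b * (dP th0 a b l / P th0 a b) = dP th0 a b l)
    by (intros; apply Rmult_div_cancel_support; auto).
  exists (grad n (P th0) (dP th0) (pi th0) c), (rsum p (bias_const n (dP th0) c C rho)),
    (rsum p (fun l => Rsqr (norm1 n c) * Rsqr (score_norm n (P th0) (dP th0) l))).
  split; [|intros N HN; split].
  - intros l Hl. now apply (stationary_cost_partial n p U P dP th0 eps0 Heps0 HU Htr Hder pi C rho).
  - apply (estimator_bias_norm_le n p _ _ _ _ _ C rho (Htr _ HU0) (proj1 (Hst _ HU0))); auto.
  - apply (estimator_variance_trace_le n p); auto.
Qed.
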